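(* Let $p\ge1$, let $m\in\mathbb Z$ with $1\le m\le p$, and let $n\in\mathbb Z_{\ge0}$ with $m\ne n$. Then $[v(-m,n),\det\mathbf V_p]=0$ in $U(\mathcal L_r)$.
   Context: Fix an integer $d\ge 2$ and $r\in\mathbb{C}$. Let $\hat{\mathfrak h}$ be the complex Lie algebra with basis $\{v^i(m)\mid 1\le i\le d,\ m\in\mathbb{Z}\}\cup\{\mathbf c\}$ and bracket $[v^i(m),v^j(n)]=\delta_{m+n,0}\delta_{i,j}\,m\,\mathbf c$, $[\mathbf c,\hat{\mathfrak h}]=0$. In $A=U(\hat{\mathfrak h})/\langle \mathbf c-1\rangle$ let $v^{ij}(m,n)$ be the image of $v^i(m)v^j(n)$; then $v^{ij}(m,n)=v^{ji}(n,m)$ unless $i=j$ and $m=-n$, and $v^{ii}(m,-m)=v^{ii}(-m,m)+m$. Let $\mathcal B=\{v^{ii}(m,n)\mid 1\le i\le d,\ m\le n\}\cup\{v^{ij}(m,n)\mid 1\le i<j\le d,\ m,n\in\mathbb Z\}$; then $\mathcal B\cup\{1\}$ is linearly independent, $\mathcal L:=\mathrm{span}_{\mathbb C}\mathcal B\oplus\mathbb C\subset A$ contains every $v^{ij}(m,n)$ and is closed under $[x,y]=xy-yx$. With $\pi_1,\pi_2$ the projections of $\mathcal L$ onto $\mathrm{span}\,\mathcal B$ and onto $\mathbb C$, $[x,y]_r=\pi_1([x,y])+r\pi_2([x,y])$ is a Lie bracket on $\mathcal L$; call this Lie algebra $\mathcal L_r$; commutators in $U(\mathcal L_r)$ are taken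 with respect to $[\cdot,\cdot]_r$. Write $v(m,n)=v^{11}(m,n)$. The elements $v(-s,-t)$ with $s,t>0$ pairwise commute in $U(\mathcal L_r)$, so the determinant $\det\mathbf V_p=\sum_{\sigma\in\mathfrak S_p}\mathrm{sgn}(\sigma)\prod_{q=1}^p v(-q,-\sigma(q))\in U(\mathcal L_r)$ of the $p\times p$ matrix $\mathbf V_p=(v(-s,-t))_{1\le s,t\le p}$ is well defined. *)

From mathcomp Require Import all_boot all_algebra all_fingroup.
From mathcomp Require Import reals Rstruct complex.
Set Implicit Arguments. Unset Strict Implicit. Unset Printing Implicit Defensive.
Import GRing.Theory.
Local Open Scope ring_scope.

Definition CC : numClosedFieldType := (Rdefinitions.R)[i].

(* Basis B of span B (ignoring the summand C = span{1}):
   v^{ij}(m,n) is a basis element iff i < j, or i = j and m <= n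
   (indices i, j range over 1..d). *)
Definition isB (i j : nat) (m n : int) : bool := (i < j)%N || ((i == j) && (m <= n)).

(* Normal form in L of the element v^{ij}(m,n) of A:
   returns (i',j',m',n',c) with v^{i'j'}(m',n') in B and
   v^{ij}(m,n) = v^{i'j'}(m',n') + c (c an integer constant in C = span{1}). *)
Definition nf (i j : nat) (m n : int) : nat * nat * int * int * int :=
  if (i < j)%N then (i, j, m, n, 0)
  else if (j < i)%N then (j, i, n, m, 0)
  else if m <= n then (i, i, m, n, 0)
  else (i, i, n, m, if m + n == 0 then m else 0).

Section Img.
Variable (A : algType CC).
(* f : values of a linear map phi : L_r -> A on the basis B
   (f i j m n = phi (v^{ij}(m,n)), only meaningful for isB i j m n),
   z = phi(1), the image of the central basis vector 1 of L. *)
Variables (f : nat -> nat -> int -> int -> A) (z : A).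

(* phi applied to (pi_1(x) + s * pi_2(x)) where x = v^{ij}(m,n) in L.
   With s = 1 this is phi(v^{ij}(m,n)); with s = r it is the image of the
   element pi_1 + r pi_2 used in the bracket [.,.]_r. *)
Definition img (s : CC) (i j : nat) (m n : int) : A :=
  let: (i', j', m', n', c) := nf i j m n in f i' j' m' n' + (s * c%:~R) *: z.

(* [v^i(m), v^k(l)] = delta_{ik} delta_{m+l,0} m in \hat h (with c = 1). *)
Definition sc (i : nat) (m : int) (k : nat) (l : int) : int :=
  if (i == k) && (m + l == 0) then m else 0.

(* phi([v^{ij}(m,n), v^{kl}(m',n')]_r), computed from
   [xy,zw] = [y,z] xw + [y,w] xz + [x,z] wy + [x,w] zy in A. *)
Definition brr (r : CC) (i j : nat) (m n : int) (k l : nat) (m' n' : int) : A :=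
  (img r i l m n') *~ sc j n k m' + (img r i k m m') *~ sc j n l n'
  + (img r l j n' n) *~ sc i m k m' + (img r k j m' n) *~ sc i m l n'.

(* (f, z) defines a Lie algebra homomorphism L_r -> (A, commutator):
   phi is defined on the basis B \cup {1} and extended linearly. *)
Definition lie_hom (d : nat) (r : CC) : Prop :=
  (forall i j k l m n m' n',
     (1 <= i <= d)%N -> (1 <= j <= d)%N -> (1 <= k <= d)%N -> (1 <= l <= d)%N ->
     isB i j m n -> isB k l m' n' ->
     f i j m n * f k l m' n' - f k l m' n' * f i j m n = brr r i j m n k l m' n')
  /\ (forall i j m n, (1 <= i <= d)%N -> (1 <= j <= d)%N -> isB i j m n ->
        z * f i j m n - f i j m n * z = 0).

(* phi(v(m,n)) with v = v^{11}. *)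
Definition vv (m n : int) : A := img 1 1 1 m n.

Definition detVp (p : nat) : A :=
  \sum_(s : 'S_p) ((-1) ^+ s : CC) *:
     \prod_(q < p) vv (- (q.+1%:Z)) (- ((s q).+1%:Z)).

End Img.

From mathcomp Require Import all_boot all_algebra all_fingroup.
From mathcomp Require Import reals Rstruct complex.
From mathcomp Require Import zify.
Set Implicit Arguments. Unset Strict Implicit. Unset Printing Implicit Defensive.
Import GRing.Theory Num.Theory.
Local Open Scope ring_scope.

(* Write y = v(-m,n). For s, t > 0 one has
   [y, v(-s,-t)] = n (delta_{n,s} v(-m,-t) + delta_{n,t} v(-m,-s)),
   a combination of entries of V_p, and the entries of V_p commute. The Leibniz
   rule therefore gives [y, det V_p] = 0 when n is not in [1, p], and otherwise
   n times the sum of two row determinants: V_p with its n-th row replaced by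
   its m-th row, and V_p with its n-th column replaced by its m-th column. As
   m <> n, both have a repeated row or column and vanish. *)

Section CommutingProducts.
Variables (R : pzRingType) (I : eqType) (F : I -> R).
Hypothesis F_comm : forall i j, GRing.comm (F i) (F j).

Lemma big_rem_comm (r : seq I) x : x \in r ->
  \prod_(i <- r) F i = F x * \prod_(i <- rem x r) F i.
Proof.
elim: r => [//|y r IH]; rewrite inE big_cons /=.
have [-> //|nyx /= xr] := eqVneq y x.
by rewrite big_cons IH // !mulrA F_comm.
Qed.

Lemma perm_big_comm (r1 r2 : seq I) : perm_eq r1 r2 ->
  \prod_(i <- r1) F i = \prod_(i <- r2) F i.
Proof.
elim: r1 r2 => [|x r1 IH] r2 P.
  by move: P; rewrite perm_sym => /perm_nilP ->.
have xr2 : x \in r2 by rewrite -(perm_mem P) mem_head.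
rewrite big_cons (big_rem_comm xr2) (IH (rem x r2)) //.
by rewrite -(perm_cons x) (permPl P) perm_to_rem.
Qed.

End CommutingProducts.

Section CommutingFinProducts.
Variables (R : pzRingType) (I : finType) (F : I -> R).
Hypothesis F_comm : forall i j, GRing.comm (F i) (F j).

Lemma bigD1_comm i0 : \prod_i F i = F i0 * \prod_(i | i != i0) F i.
Proof.
rewrite (big_rem_comm F_comm (mem_index_enum i0)).
by rewrite rem_filter ?index_enum_uniq // big_filter.
Qed.

Lemma reindex_prod_comm (h : I -> I) : bijective h ->
  \prod_i F (h i) = \prod_i F i.
Proof.
move=> [g hK gK]; rewrite -(big_map h predT F); apply: perm_big_comm => //.
apply: uniq_perm; rewrite ?map_inj_uniq ?index_enum_uniq //; first exact: can_inj hK.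
by move=> x; rewrite mem_index_enum -(gK x) map_f ?mem_index_enum.
Qed.

End CommutingFinProducts.

Lemma sum_prod_at_comm (R : pzRingType) (I : finType) (F G : I -> R) i0 :
  (forall i j, GRing.comm (F i) (F j)) -> (forall j, GRing.comm (G i0) (F j)) ->
  \sum_i (G i *+ (i == i0)) * \prod_(j | j != i) F j
    = \prod_j (if j == i0 then G j else F j).
Proof.
move=> F_comm G_comm; pose H j := if j == i0 then G j else F j.
have H_comm i j : GRing.comm (H i) (H j).
  rewrite /H; do 2 case: eqP => [->|_].
  - exact: commr_refl.
  - exact: G_comm.
  - exact/commr_sym/G_comm.
  - exact: F_comm.
rewrite (bigD1 i0) //= eqxx [X in _ + X]big1 ?addr0 => [|i /negbTE i_neq]; last first.
  by rewrite i_neq mulr0n mul0r.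
rewrite (bigD1_comm H_comm i0) /H eqxx mulr1n.
by congr (_ * _); apply: eq_bigr => j /negbTE->.
Qed.

Definition bracket (R : pzRingType) (x y : R) : R := x * y - y * x.

Lemma bracketMr (R : pzRingType) (x y w : R) :
  bracket x (y * w) = bracket x y * w + y * bracket x w.
Proof. by rewrite /bracket mulrBl mulrBr !mulrA addrA subrK. Qed.

Lemma bracket_eq0 (R : pzRingType) (x y : R) : (bracket x y == 0) = (x * y == y * x).
Proof. exact: subr_eq0. Qed.

Lemma bracket_prod (R : pzRingType) (I : eqType) (F : I -> R) (y : R) (r : seq I) :
  uniq r -> (forall i j, GRing.comm (bracket y (F i)) (F j)) ->
  bracket y (\prod_(i <- r) F i) =
  \sum_(i <- r) bracket y (F i) * \prod_(j <- r | j != i) F j.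
Proof.
move=> + yF_comm; elim: r => [|x r IH] /=.
  by rewrite !big_nil /bracket mul1r mulr1 subrr.
case/andP=> xr ur; rewrite !big_cons eqxx bracketMr IH // mulr_sumr.
congr (_ * _ + _).
  rewrite big_seq_cond [RHS]big_seq_cond; apply: eq_bigl => j.
  by case: (boolP (j \in r)) => //= jr; apply/esym; apply: contraNneq xr => <-.
apply: eq_big_seq => i ir; rewrite big_cons ifT; last by apply: contraNneq xr => ->.
by rewrite mulrA -yF_comm mulrA.
Qed.

Section RowDeterminant.
Variables (K : numFieldType) (A : algType K) (p : nat).

Definition rdet (M : 'I_p -> 'I_p -> A) : A :=
  \sum_(s : 'S_p) ((-1) ^+ s : K) *: \prod_(j < p) M j (s j).

Lemma bracket_rdet (y : A) M :
  bracket y (rdet M) = \sum_(s : 'S_p) ((-1) ^+ s : K) *: bracket y (\prod_(j < p) M j (s j)).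
Proof.
rewrite /bracket mulr_sumr mulr_suml -sumrB; apply: eq_bigr => s _.
by rewrite -scalerAr -scalerAl scalerBr.
Qed.

Lemma bracket_rdet_eq0 (y : A) M :
  (forall j k, GRing.comm y (M j k)) -> bracket y (rdet M) = 0.
Proof.
move=> yM; rewrite bracket_rdet big1 // => s _.
have /eqP : GRing.comm y (\prod_(j < p) M j (s j)) by apply: commr_prod.
by rewrite -bracket_eq0 => /eqP->; rewrite scaler0.
Qed.

Lemma eq_oppr_eq0 (x : A) : x = - x -> x = 0.
Proof.
move=> x_eqN; have two_x : (2%:R : K) *: x = 0 by rewrite scaler_nat mulr2n {1}x_eqN addNr.
by rewrite -[x]scale1r -(@mulVf _ 2%:R) ?pnatr_eq0 // -scalerA two_x scaler0.
Qed.

Lemma rdet_alternate_col M (k1 k2 : 'I_p) :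
  k1 != k2 -> (forall j, M j k1 = M j k2) -> rdet M = 0.
Proof.
move=> k12 Mk; apply: eq_oppr_eq0.
rewrite {1}/rdet (reindex_inj (mulIg (tperm k1 k2))) -sumrN; apply: eq_bigr => s _.
rewrite odd_permM odd_tperm k12 signr_addb mulrN1 scaleNr; congr (- (_ *: _)).
by apply: eq_bigr => j _; rewrite permM; case: tpermP => [->|->|].
Qed.

Lemma rdet_alternate_row M (j1 j2 : 'I_p) :
  (forall a b c e, GRing.comm (M a b) (M c e)) ->
  j1 != j2 -> (forall k, M j1 k = M j2 k) -> rdet M = 0.
Proof.
move=> M_comm j12 Mj; apply: eq_oppr_eq0.
rewrite {1}/rdet (reindex_inj (mulgI (tperm j1 j2))) -sumrN; apply: eq_bigr => s _.
rewrite odd_permM odd_tperm j12 signr_addb mulNr mul1r scaleNr; congr (- (_ *: _)).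
have tperm_bij : bijective (tperm j1 j2) by exists (tperm j1 j2) => i; rewrite tpermK.
have Ms_comm i j : GRing.comm (M i (s i)) (M j (s j)) by apply: M_comm.
rewrite -(reindex_prod_comm Ms_comm tperm_bij); apply: eq_bigr => j _.
by rewrite permM; case: tpermP => [->|->|] //; rewrite Mj.
Qed.

End RowDeterminant.

Section LieHomImage.
Variables (A : algType CC) (f : nat -> nat -> int -> int -> A) (z : A).

Lemma img11_sum_neq0 (s : CC) (a b : int) : a + b != 0 ->
  img f z s 1 1 a b = if a <= b then f 1 1 a b else f 1 1 b a.
Proof.
by move=> ab; rewrite /img /nf /=; case: ifP => _; rewrite ?(negbTE ab) mulr0 scale0r addr0.
Qed.

Lemma sc11_neg (a b : int) : a < 0 -> b < 0 -> sc 1 a 1 b = 0.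
Proof. by rewrite /sc eqxx /=; case: eqP => //; lia. Qed.

Lemma mulrz_sc11 (x : A) (n s : nat) : x *~ sc 1 n%:Z 1 (- s%:Z) = x *+ (n == s) *+ n.
Proof.
rewrite /sc eqxx /= addr_eq0 opprK eqz_nat.
by case: eqP => _; rewrite ?mulr0z ?mulr0n ?mul0rn ?mulr1n.
Qed.

Definition vneg (s t : nat) : A := vv f z (- s%:Z) (- t%:Z).

Lemma vnegE s t : (0 < s)%N -> (0 < t)%N ->
  vneg s t = if (t <= s)%N then f 1 1 (- s%:Z) (- t%:Z) else f 1 1 (- t%:Z) (- s%:Z).
Proof.
move=> s_gt0 t_gt0; rewrite /vneg /vv img11_sum_neq0; last by lia.
by rewrite lerN2 lez_nat.
Qed.

Lemma vneg_sym s t : (0 < s)%N -> (0 < t)%N -> vneg s t = vneg t s.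
Proof. by move=> s_gt0 t_gt0; rewrite !vnegE //; case: ltngtP => // ->. Qed.

Variable m : nat.
Hypothesis m_gt0 : (0 < m)%N.

Lemma rdet_vneg_col_subst p (N : 'I_p) : (m <= p)%N -> N.+1 != m ->
  rdet (fun j k : 'I_p => if k == N then vneg m j.+1 else vneg j.+1 k.+1) = 0.
Proof.
move=> m_le_p N_neq; have m1_lt_p : (m.-1 < p)%N by rewrite prednK.
pose M0 : 'I_p := Ordinal m1_lt_p; have M0_eq : M0.+1 = m by rewrite /= prednK.
have N_neq_M0 : N != M0 by apply: contraNneq N_neq => ->; rewrite M0_eq.
apply: (rdet_alternate_col (k1 := N) (k2 := M0)) => // j.
by rewrite eqxx eq_sym (negbTE N_neq_M0) M0_eq vneg_sym.
Qed.

Variables (d : nat) (r : CC).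
Hypotheses (d_ge2 : (2 <= d)%N) (hom : lie_hom f z d r).

Lemma bracket_f11 (a b a' b' : int) : a <= b -> a' <= b' ->
  bracket (f 1 1 a b) (f 1 1 a' b') = brr f z r 1 1 a b 1 1 a' b'.
Proof.
have one_le : (1 <= 1 <= d)%N by rewrite leqnn ltnW.
have isB11 x y : x <= y -> isB 1 1 x y by rewrite /isB ltnn eqxx => ->.
by case: hom => bracket_hom _ ab ab'; apply: bracket_hom; rewrite ?isB11.
Qed.

Lemma vneg_comm s t s' t' : (0 < s)%N -> (0 < t)%N -> (0 < s')%N -> (0 < t')%N ->
  GRing.comm (vneg s t) (vneg s' t').
Proof.
have f11_comm (a b a' b' : int) : a <= b < 0 -> a' <= b' < 0 ->
    GRing.comm (f 1 1 a b) (f 1 1 a' b').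
  case/andP=> ab b0 /andP[ab' b'0]; apply/eqP; rewrite -bracket_eq0 bracket_f11 //.
  by rewrite /brr !sc11_neg ?mulr0z ?addr0 //; lia.
move=> *; rewrite !vnegE //.
by case: ifP => ts; case: ifP => ts'; apply: f11_comm; lia.
Qed.

Lemma rdet_vneg_row_subst p (N : 'I_p) : (m <= p)%N -> N.+1 != m ->
  rdet (fun j k : 'I_p => if j == N then vneg m k.+1 else vneg j.+1 k.+1) = 0.
Proof.
move=> m_le_p N_neq; have m1_lt_p : (m.-1 < p)%N by rewrite prednK.
pose M0 : 'I_p := Ordinal m1_lt_p; have M0_eq : M0.+1 = m by rewrite /= prednK.
have N_neq_M0 : N != M0 by apply: contraNneq N_neq => ->; rewrite M0_eq.
apply: (rdet_alternate_row (j1 := N) (j2 := M0)) => // [a b c e | k].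
  by do 2 case: ifP => _; apply: vneg_comm.
by rewrite eqxx eq_sym (negbTE N_neq_M0) M0_eq.
Qed.

Variable n : nat.
Hypothesis m_neq_n : m <> n.
Local Notation y := (vv f z (- m%:Z) n%:Z).

Lemma bracket_vv_vneg s t : (0 < s)%N -> (0 < t)%N ->
  bracket y (vneg s t) = (vneg m t *+ (n == s) + vneg m s *+ (n == t)) *+ n.
Proof.
have y_f11 : y = f 1 1 (- m%:Z) n%:Z by rewrite /vv img11_sum_neq0 ?ifT //; lia.
have bracket_y_f11 (a b : int) : a <= b -> b < 0 -> bracket (f 1 1 (- m%:Z) n%:Z) (f 1 1 a b)
    = img f z r 1 1 (- m%:Z) b *~ sc 1 n 1 a + img f z r 1 1 (- m%:Z) a *~ sc 1 n 1 b.
  move=> ab b0; rewrite bracket_f11 //; last by lia.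
  by rewrite /brr [sc 1 (- _) 1 a]sc11_neg ?[sc 1 (- _) 1 b]sc11_neg ?mulr0z ?addr0 //; lia.
have img_vneg u v : (0 < u)%N -> (0 < v)%N -> img f z r 1 1 (- u%:Z) (- v%:Z) = vneg u v.
  by move=> u0 v0; rewrite /vneg /vv !img11_sum_neq0 //; lia.
move=> s_gt0 t_gt0; rewrite y_f11 vnegE //; case: ifP => ts.
  by rewrite bracket_y_f11 ?img_vneg ?mulrz_sc11 -?mulrnDl //; lia.
by rewrite bracket_y_f11 ?img_vneg ?mulrz_sc11 -?mulrnDl 1?addrC //; lia.
Qed.

Lemma bracket_vv_vneg_prod p (N : 'I_p) (s : 'S_p) : n = N.+1 ->
  bracket y (\prod_(j < p) vneg j.+1 (s j).+1) =
  (\prod_(j < p) (if j == N then vneg m (s j).+1 else vneg j.+1 (s j).+1)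
   + \prod_(j < p) (if s j == N then vneg m j.+1 else vneg j.+1 (s j).+1)) *+ n.
Proof.
move=> n_eq; have V_comm (i j : 'I_p) : GRing.comm (vneg i.+1 (s i).+1) (vneg j.+1 (s j).+1).
  exact: vneg_comm.
have yV_comm (i j : 'I_p) :
    GRing.comm (bracket y (vneg i.+1 (s i).+1)) (vneg j.+1 (s j).+1).
  by rewrite bracket_vv_vneg //; apply/commr_sym/commrMn/commrD; apply/commrMn/vneg_comm.
rewrite bracket_prod ?index_enum_uniq //.
under eq_bigr do rewrite bracket_vv_vneg // mulrnAl mulrDl.
have N_eq (q : 'I_p) : (n == q.+1) = (q == N) by rewrite n_eq eqSS eq_sym.
rewrite sumrMnl big_split /=; congr ((_ + _) *+ _).
  under eq_bigr do rewrite N_eq.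
  by rewrite (sum_prod_at_comm V_comm) // => j; apply: vneg_comm.
have s_eq q : (n == (s q).+1) = (q == (s^-1)%g N).
  by rewrite -(canF_eq (permK s)) N_eq.
under eq_bigr do rewrite s_eq.
rewrite (sum_prod_at_comm V_comm) => [|j]; last exact: vneg_comm.
by apply: eq_bigr => j _; rewrite (canF_eq (permK s)).
Qed.

Lemma bracket_vv_detVp p (N : 'I_p) : n = N.+1 ->
  bracket y (detVp f z p) =
  (rdet (fun j k : 'I_p => if j == N then vneg m k.+1 else vneg j.+1 k.+1)
   + rdet (fun j k : 'I_p => if k == N then vneg m j.+1 else vneg j.+1 k.+1)) *+ n.
Proof.
move=> n_eq; have -> : detVp f z p = rdet (fun j k : 'I_p => vneg j.+1 k.+1) by [].
rewrite bracket_rdet.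
under eq_bigr do rewrite (bracket_vv_vneg_prod _ n_eq) -scalerMnr scalerDr.
by rewrite sumrMnl big_split.
Qed.

End LieHomImage.

Theorem lemma6p2 (d : nat) (r : CC) (p m n : nat) :
  (2 <= d)%N -> (1 <= p)%N -> (1 <= m <= p)%N -> m <> n ->
  forall (A : algType CC) (f : nat -> nat -> int -> int -> A) (z : A),
    lie_hom f z d r ->
    vv f z (- (m%:Z)) n%:Z * detVp f z p - detVp f z p * vv f z (- (m%:Z)) n%:Z = 0.
Proof.
move=> d_ge2 _ /andP[m_gt0 m_le_p] m_neq_n A f z hom.
change (bracket (vv f z (- m%:Z) n%:Z) (rdet (fun j k : 'I_p => vneg f z j.+1 k.+1)) = 0).
have [/andP[n_gt0 n_le_p] | n_out] := boolP (0 < n <= p)%N; last first.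
  have n_neq (q : 'I_p) : (n == q.+1) = false.
    by apply: contraNF n_out => /eqP->; rewrite ltn_ord.
  apply: bracket_rdet_eq0 => j k; apply/eqP; rewrite -bracket_eq0.
  by rewrite (bracket_vv_vneg m_gt0 d_ge2 hom m_neq_n) // !n_neq !mulr0n addr0 mul0rn.
have n1_lt_p : (n.-1 < p)%N by lia.
have n_eq : n = (Ordinal n1_lt_p).+1 by rewrite /= prednK.
have n_neq_m : (Ordinal n1_lt_p).+1 != m by rewrite -n_eq; apply/eqP/nesym.
rewrite (bracket_vv_detVp m_gt0 d_ge2 hom m_neq_n n_eq).
by rewrite (rdet_vneg_row_subst m_gt0 d_ge2 hom) // rdet_vneg_col_subst // addr0 mul0rn.
Qed.
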